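(* Let $m,K$ be positive integers and $b_1,\dots,b_{3m}$ positive integers with $K/4<b_i<K/2$ and $\sum_i b_i=mK$. Set $W=100(5m)^2K$, $a_i=b_i+W$, $A=\{a_1,\dots,a_{3m}\}$, $L=3W+K$, $\epsilon=1/(400(5m)^2)$, $h=\lfloor 4\epsilon L\rfloor$, $H=L+h$. Let $X$ be the multiset consisting of $a_1,\dots,a_{3m}$, $m$ copies of $-H$ and $m$ copies of $h$, and let $T_{\min}$ be a minimum-cost addition tree over $X$. Then $C(T_{\min})\ge m(H+h)$. Moreover, $C(T_{\min})=m(H+h)$ if and only if $(A,L)$ is a positive instance of 3-PARTITION.
   Context: An addition tree over a multiset $X$ is a full binary tree whose leaves are labeled by the elements of $X$ (each used once), each internal node having value equal to the sum of its children's values; its cost $C(T)$ is the sum of the absolute values of the values of its internal nodes, and $T_{\min}$ minimizes $C$. $(A,L)$ is a positive instance of 3-PARTITION if $A$ can be partitioned into $m$ disjoint submultisets each summing to $L$. *)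

From mathcomp Require Import all_boot all_order all_algebra.
Set Implicit Arguments. Unset Strict Implicit. Unset Printing Implicit Defensive.
Import Order.TTheory GRing.Theory Num.Theory.
Local Open Scope ring_scope.

Inductive tree := Leaf of int | Node of tree & tree.

Fixpoint leaves (t : tree) : seq int :=
  match t with Leaf z => [:: z] | Node l r => leaves l ++ leaves r end.

Fixpoint tvalue (t : tree) : int :=
  match t with Leaf z => z | Node l r => tvalue l + tvalue r end.

Fixpoint tcost (t : tree) : int :=
  match t with
  | Leaf _ => 0
  | Node l r => `|tvalue l + tvalue r| + tcost l + tcost r
  end.

Definition addition_tree (X : seq int) (t : tree) : Prop := perm_eq (leaves t) X.

Definition min_addition_tree (X : seq int) (t : tree) : Prop :=
  addition_tree X t /\ forall t', addition_tree X t' -> tcost t <= tcost t'.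

(* (A, L) positive instance of 3-PARTITION: the multiset A = {a_0..a_{n-1}}
   splits into m disjoint submultisets (blocks f^-1(j)) each summing to L. *)
Definition three_partition (n m : nat) (a : 'I_n -> int) (L : int) : Prop :=
  exists f : 'I_n -> 'I_m, forall j : 'I_m, \sum_(i | f i == j) a i = L.

From mathcomp Require Import all_boot all_order all_algebra.
From mathcomp Require Import zify ring.
Import Order.TTheory GRing.Theory Num.Theory.
Local Open Scope ring_scope.

(* A multiset s of leaves is summarised by its numbers of items a_i, of copies
   of -H and of copies of h, and by the excess of its items over W; its sum is
   then W w + e + t for a weight w, an offset e and an h-part t.  From these
   data we build a potential [pot s] which vanishes on single leaves and which,
   when two subtrees are joined, grows by at most 5 times the absolute value of
   the new internal node.  Summing over the internal nodes gives
   5 C(T) >= pot X = 5 m (H + h).  In case of equality every join is tight,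
   and tight joins only ever produce a handful of leaf multisets; at the root
   the only candidate splits the items into m blocks of sum L, i.e. it is a
   3-partition.  Conversely, a 3-partition gives a tree made of m zero-sum
   subtrees h + ((-H + (x1 + x2)) + x3), each of cost H + h. *)

(** * A potential on states *)

Definition wpot (w : int) : int :=
  if w == 0 then 1 else if 0 < w then w - 1 else if -2 <= w then 2 else 1.

Definition hflag (w t : int) : int := if (0 < t) && (w != 0) then 1 else 0.

Definition ecoef (w : int) : int :=
  if w == 0 then -10 else if w == 1 then -5 else if w == -1 then -5
  else if w == -2 then -1 else 0.

Definition tcoef (w : int) : int :=
  if w == 1 then 1 else if w == 2 then 1 else if w == -1 then -1
  else if w == -3 then 1 else 0.

Definition fine_pot (Y w e t : int) : int :=
  ecoef w * e + 5 * tcoef w * t - 5 * Y * hflag w t.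

Definition state_pot (W Y w e t : int) : int :=
  5 * W * (wpot w + hflag w t) + fine_pot Y w e t.

Definition coarse_slack (w1 w2 t1 t2 : int) : int :=
  `|w1 + w2| - 1 + wpot w1 + wpot w2 - wpot (w1 + w2)
  + hflag w1 t1 + hflag w2 t2 - hflag (w1 + w2) (t1 + t2).

Definition merge_slack (W Y w1 w2 e1 e2 t1 t2 : int) : int :=
  5 * `|W * (w1 + w2) + (e1 + e2) + (t1 + t2)| - 5 * W
  + state_pot W Y w1 e1 t1 + state_pot W Y w2 e2 t2
  - state_pot W Y (w1 + w2) (e1 + e2) (t1 + t2).

Definition admissible (K Y w e t : int) : Prop :=
  [/\ -Y < e < Y, 0 <= t < Y &
    [/\ w = 1 -> 2 * e < K, w = 0 -> e <= 0, w = -1 -> e <= -2 * K,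
        w = -2 -> e <= -3 * K & w = -3 -> e <= -4 * K]].

Definition tight_pair (w1 w2 e t : int) : Prop :=
  w1 = 1 /\ w2 = 1 /\ t = 0 \/ w1 = 2 /\ w2 = -3 /\ t = 0 \/
  w1 = 0 /\ w2 = 0 /\ e + t = 0 \/ w1 = 1 /\ w2 = -1 /\ t = 0 /\ e <= 0.

Definition tight_merge (w1 w2 e t : int) : Prop :=
  tight_pair w1 w2 e t \/ tight_pair w2 w1 e t.

Lemma wpotP (w : int) : w = 0 /\ wpot w = 1 \/ 0 < w /\ wpot w = w - 1 \/
  (w = -1 \/ w = -2) /\ wpot w = 2 \/ w <= -3 /\ wpot w = 1.
Proof. by rewrite /wpot; repeat case: ifP => ?; lia. Qed.

Lemma hflagP (w t : int) :
  (0 < t /\ w <> 0 /\ hflag w t = 1) \/ ((t <= 0 \/ w = 0) /\ hflag w t = 0).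
Proof. by rewrite /hflag; case: ifP => ?; [left | right]; lia. Qed.

Lemma coarse_slack_ge0 (w1 w2 : int) {t1 t2 : int} :
  0 <= t1 -> 0 <= t2 -> 0 <= coarse_slack w1 w2 t1 t2.
Proof.
move=> t1_ge0 t2_ge0; rewrite /coarse_slack.
have := wpotP w1; have := wpotP w2; have := wpotP (w1 + w2).
have := hflagP w1 t1; have := hflagP w2 t2; have := hflagP (w1 + w2) (t1 + t2).
lia.
Qed.

Lemma coarse_slack_eq0 {w1 w2 t1 t2 : int} : 0 <= t1 -> 0 <= t2 ->
  coarse_slack w1 w2 t1 t2 = 0 -> -3 <= w1 <= 2 /\ -3 <= w2 <= 2.
Proof.
move=> t1_ge0 t2_ge0; rewrite /coarse_slack.
have := wpotP w1; have := wpotP w2; have := wpotP (w1 + w2).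
have := hflagP w1 t1; have := hflagP w2 t2; have := hflagP (w1 + w2) (t1 + t2).
lia.
Qed.

Lemma fine_pot_bound (w : int) {Y e t : int} : -Y < e < Y -> 0 <= t < Y ->
  `|fine_pot Y w e t| <= 20 * Y.
Proof.
move=> e_bd t_bd; rewrite /fine_pot /ecoef /tcoef.
by case: (hflagP w t) => [[_ [_ ->]] | [_ ->]]; repeat case: ifP => _; lia.
Qed.

Lemma merge_slackE (W Y w1 w2 e1 e2 t1 t2 : int) :
  merge_slack W Y w1 w2 e1 e2 t1 t2 =
    5 * (`|W * (w1 + w2) + (e1 + e2) + (t1 + t2)| - W * `|w1 + w2|)
    + 5 * W * coarse_slack w1 w2 t1 t2
    + (fine_pot Y w1 e1 t1 + fine_pot Y w2 e2 t2
       - fine_pot Y (w1 + w2) (e1 + e2) (t1 + t2)).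
Proof. by rewrite /merge_slack /state_pot /coarse_slack; ring. Qed.

Section MergeInequality.

Variables W Y K : int.
Hypotheses (K_gt0 : 0 < K) (Y_ge1 : 1 <= Y) (W_large : 100 * Y <= W).

Lemma merge_slack_gt0 {w1 w2 e1 e2 t1 t2 : int} :
  admissible K Y w1 e1 t1 -> admissible K Y w2 e2 t2 ->
  admissible K Y (w1 + w2) (e1 + e2) (t1 + t2) ->
  0 < coarse_slack w1 w2 t1 t2 -> 0 < merge_slack W Y w1 w2 e1 e2 t1 t2.
Proof.
move=> [e1_bd t1_bd _] [e2_bd t2_bd _] [e12_bd t12_bd _] coarse_gt0.
have := fine_pot_bound w1 e1_bd t1_bd; have := fine_pot_bound w2 e2_bd t2_bd.
have := fine_pot_bound (w1 + w2) e12_bd t12_bd.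
have W_coarse : W <= W * coarse_slack w1 w2 t1 t2.
  by rewrite -[X in X <= _]mulr1 ler_pM2l; lia.
(* The triangle inequality loses at most 5 |e + t| < 20 Y, the fine parts
   at most 60 Y, while the coarse slack gains 5 W >= 500 Y. *)
have tri : W * `|w1 + w2| - `|e1 + e2 + (t1 + t2)|
    <= `|W * (w1 + w2) + (e1 + e2) + (t1 + t2)|.
  by rewrite -(gtr0_norm (_ : 0 < W)) ?normrM; lia.
rewrite merge_slackE; lia.
Qed.

Lemma merge_slack_small {w1 w2 e1 e2 t1 t2 : int} :
  -3 <= w1 <= 2 -> -3 <= w2 <= 2 -> coarse_slack w1 w2 t1 t2 = 0 ->
  admissible K Y w1 e1 t1 -> admissible K Y w2 e2 t2 ->
  admissible K Y (w1 + w2) (e1 + e2) (t1 + t2) ->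
  0 <= merge_slack W Y w1 w2 e1 e2 t1 t2 /\
  (merge_slack W Y w1 w2 e1 e2 t1 t2 = 0 -> tight_merge w1 w2 (e1 + e2) (t1 + t2)).
Proof.
(* A finite check over the 36 pairs of weights. *)
move=> w1_bd w2_bd.
move: (hflagP w1 t1) (hflagP w2 t2) (hflagP (w1 + w2) (t1 + t2)).
have [] : (w1 = -3 \/ w1 = -2 \/ w1 = -1 \/ w1 = 0 \/ w1 = 1 \/ w1 = 2) /\
          (w2 = -3 \/ w2 = -2 \/ w2 = -1 \/ w2 = 0 \/ w2 = 1 \/ w2 = 2) by lia.
case=> [->|[->|[->|[->|[->|->]]]]] [->|[->|[->|[->|[->|->]]]]];
rewrite /merge_slack /coarse_slack /state_pot /fine_pot /wpot /ecoef /tcoef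
  /tight_merge /tight_pair /=;
move=> ? ? ? ? [? ? [? ? ? ? ?]] [? ? [? ? ? ? ?]] [? ? [? ? ? ? ?]]; lia.
Qed.

Lemma merge_slack_ge0 {w1 w2 e1 e2 t1 t2 : int} :
  admissible K Y w1 e1 t1 -> admissible K Y w2 e2 t2 ->
  admissible K Y (w1 + w2) (e1 + e2) (t1 + t2) ->
  0 <= merge_slack W Y w1 w2 e1 e2 t1 t2 /\
  (merge_slack W Y w1 w2 e1 e2 t1 t2 = 0 -> tight_merge w1 w2 (e1 + e2) (t1 + t2)).
Proof.
move=> adm1 adm2 adm12.
have t1_ge0 : 0 <= t1 by case: adm1 => _ /andP[].
have t2_ge0 : 0 <= t2 by case: adm2 => _ /andP[].
have := coarse_slack_ge0 w1 w2 t1_ge0 t2_ge0.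
rewrite le_eqVlt => /orP[/eqP/esym coarse0 | coarse_gt0].
  have [w1_bd w2_bd] := coarse_slack_eq0 t1_ge0 t2_ge0 coarse0.
  exact: merge_slack_small.
by have := merge_slack_gt0 adm1 adm2 adm12 coarse_gt0; lia.
Qed.

End MergeInequality.

Lemma admissible_counts (K h m p n q b : int) :
  1 <= K -> 3 * K <= h -> 0 <= p <= 3 * m -> 0 <= n <= m -> 0 <= q <= m ->
  p * (K + 1) <= 4 * b -> 2 * b <= p * (K - 1) ->
  admissible K (m * (K + h) + 1) (p - 3 * n) (b - n * (K + h)) (q * h).
Proof.
move=> K_ge1 h_ge /andP[p_ge0 p_le] /andP[n_ge0 n_le] /andP[q_ge0 q_le] b_lo b_hi.
have nh : 3 * (n * K) <= n * h by nia.
have [nK nh'] : n * K <= m * K /\ n * h <= m * h by split; nia.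
have [pK qh] : p * K <= 3 * (m * K) /\ q * h <= m * h by split; nia.
have [? ? ?] : [/\ 0 <= q * h, 0 <= p * K & 0 <= n * K] by split; nia.
split; [apply/andP; split; nia | apply/andP; split; nia |].
split=> w_eq.
- have p_eq : p = 3 * n + 1 by lia.
  by rewrite p_eq in b_hi; nia.
- have p_eq : p = 3 * n by lia.
  by rewrite p_eq in b_hi; nia.
- have [p_eq n_ge1] : p = 3 * n - 1 /\ 1 <= n by lia.
  by rewrite p_eq in b_hi; nia.
- have [p_eq n_ge1] : p = 3 * n - 2 /\ 1 <= n by lia.
  by rewrite p_eq in b_hi; nia.
have [p_eq n_ge1] : p = 3 * n - 3 /\ 1 <= n by lia.
by rewrite p_eq in b_hi; nia.
Qed.

(** * Blocks, fibres and zero-sum trees *)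

Lemma perm_map_cat {I T : eqType} {a : I -> T} {B C : seq T} {r : seq I} :
  perm_eq (B ++ C) (map a r) ->
  exists r1 r2, [/\ perm_eq r (r1 ++ r2), perm_eq B (map a r1) & perm_eq C (map a r2)].
Proof.
elim: B r => [|x B IH] r /= perm_BC; first by exists [::], r.
have /mapP [i i_in x_eq] : x \in map a r by rewrite -(perm_mem perm_BC) mem_head.
rewrite {}x_eq in perm_BC *.
have /IH [r1 [r2 [perm_r perm_B perm_C]]] : perm_eq (B ++ C) (map a (rem i r)).
  rewrite -(perm_cons (a i)) -map_cons; apply: perm_trans perm_BC _.
  exact/perm_map/perm_to_rem.
exists (i :: r1), r2; split; rewrite ?perm_cons //.
by rewrite (perm_trans (perm_to_rem i_in)) // perm_cons.
Qed.

Lemma perm_flatten_map_fibers {I T : eqType} {a : I -> T} {bl : seq (seq T)} {r : seq I} :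
  uniq r -> perm_eq (flatten bl) (map a r) ->
  exists f : I -> nat, {in r, forall i, f i < size bl}%N /\
    forall j, (j < size bl)%N -> perm_eq (map a [seq i <- r | f i == j]) (nth [::] bl j).
Proof.
elim: bl r => [|B bl IH] r r_uniq /=.
  move=> /perm_size; rewrite size_map => /esym/size0nil r0.
  by exists (fun _ => 0%N); split=> // i; rewrite r0.
move=> /perm_map_cat [r1 [r2 [perm_r perm_B perm_bl]]].
have r12_uniq : uniq (r1 ++ r2) by rewrite -(perm_uniq perm_r).
move: r12_uniq; rewrite cat_uniq => /and3P[_ /hasPn r1Nr2 r2_uniq].
have [f [f_lt f_fib]] := IH r2 r2_uniq perm_bl.
pose F i := if i \in r1 then 0%N else (f i).+1.
have F_r1 : {in r1, forall i, F i = 0%N} by move=> i; rewrite /F => ->.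
have F_r2 : {in r2, forall i, F i = (f i).+1} by move=> i /r1Nr2 /negbTE; rewrite /F => ->.
exists F; split.
  by move=> i; rewrite (perm_mem perm_r) mem_cat => /orP[/F_r1 -> | /[dup] /F_r2 -> /f_lt].
move=> j j_lt; rewrite (permPl (perm_map a (perm_filter _ perm_r))) filter_cat map_cat.
case: j j_lt => [_ | j /f_fib perm_j] /=.
  have -> : [seq i <- r1 | F i == 0%N] = r1 by apply/all_filterP/allP => i /F_r1 ->.
  have -> : [seq i <- r2 | F i == 0%N] = [::].
    by rewrite (eq_in_filter (a2 := pred0)) ?filter_pred0 // => i /F_r2 ->.
  by rewrite cats0 perm_sym.
have -> : [seq i <- r1 | F i == j.+1] = [::].
  by rewrite (eq_in_filter (a2 := pred0)) ?filter_pred0 // => i /F_r1 ->.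
by rewrite (eq_in_filter (a2 := fun i => f i == j)) // => i /F_r2 ->.
Qed.

Lemma three_partition_of_blocks (n m : nat) (a : 'I_n -> int) (L : int)
    (bl : seq (seq int)) :
  size bl = m -> perm_eq (flatten bl) (map a (enum 'I_n)) ->
  all (fun B => \sum_(x <- B) x == L) bl -> three_partition m a L.
Proof.
move=> <- /(perm_flatten_map_fibers (enum_uniq 'I_n)) [f [f_lt f_fib]] /allP bl_L.
have f_lt' i : (f i < size bl)%N by apply: f_lt; rewrite mem_enum.
exists (fun i => Ordinal (f_lt' i)) => j.
rewrite (eq_bigl (fun i => (i \in 'I_n) && (f i == j))) // -big_enum_cond -big_filter.
rewrite -(big_map a predT id).
by rewrite (perm_big _ (f_fib j (ltn_ord j))); apply/eqP/bl_L/mem_nth.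
Qed.

Lemma perm_fibers (T : eqType) (J : finType) (f : T -> J) (s : seq T) :
  perm_eq (flatten [seq [seq x <- s | f x == j] | j <- enum J]) s.
Proof.
apply/permP => P; rewrite count_flatten -map_comp sumnE big_map.
elim: s => [|x s IH] /=; first by rewrite big1_eq.
rewrite (eq_bigr (fun j => (if f x == j then nat_of_bool (P x) else 0)
    + count P [seq y <- s | f y == j]))%N; last by move=> j _; case: (f x == j).
rewrite big_split IH /= -big_mkcond big_enum_cond (eq_bigl (pred1 (f x))) ?big_pred1_eq //.
by move=> j; rewrite inE eq_sym.
Qed.

Lemma tvalue_leaves (t : tree) : tvalue t = \sum_(x <- leaves t) x.
Proof. by elim: t => [z|l IHl r IHr] /=; rewrite ?big_seq1 // big_cat IHl IHr. Qed.

Definition block_tree (h H : int) (xs : seq int) : tree :=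
  if xs is [:: x1; x2; x3] then
    Node (Leaf h) (Node (Node (Leaf (- H)) (Node (Leaf x1) (Leaf x2))) (Leaf x3))
  else Leaf 0.

Lemma block_tree_spec (h H x1 x2 x3 : int) :
  0 < x1 -> 0 < x2 -> 0 < x3 -> 0 <= h -> x1 + x2 + x3 + h = H ->
  [/\ tvalue (block_tree h H [:: x1; x2; x3]) = 0,
      tcost (block_tree h H [:: x1; x2; x3]) = H + h &
      leaves (block_tree h H [:: x1; x2; x3]) = [:: h, - H & [:: x1; x2; x3]]].
Proof. by move=> *; split => //=; lia. Qed.

Fixpoint chain (ts : seq tree) : tree :=
  if ts is t :: ts' then (if ts' is [::] then t else Node t (chain ts')) else Leaf 0.

Lemma chain_spec {ts : seq tree} :
  (0 < size ts)%N -> all (fun t => tvalue t == 0) ts ->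
  [/\ tvalue (chain ts) = 0, tcost (chain ts) = \sum_(t <- ts) tcost t &
      leaves (chain ts) = flatten (map leaves ts)].
Proof.
elim: ts => [|t ts IH] // _ /= /andP[/eqP t0 ts0].
case: ts IH ts0 => [|t' ts] IH ts0; first by rewrite big_seq1 cats0.
have [chain0 chain_cost chain_leaves] := IH isT ts0.
by rewrite /= t0 chain0 chain_cost chain_leaves big_cons normr0 !add0r.
Qed.

Lemma perm_flatten_cons2 (I : Type) (T : eqType) (u v : T) (F : I -> seq T) (r : seq I) :
  perm_eq (flatten [seq [:: u, v & F i] | i <- r])
          (nseq (size r) u ++ nseq (size r) v ++ flatten (map F r)).
Proof.
apply/permP => P; elim: r => //= i r IH.
by rewrite !count_cat /= !count_cat in IH *; lia.
Qed.

Lemma tree_of_fibers (n m : nat) (a : 'I_n -> int) (f : 'I_n -> 'I_m) (h H : int) :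
  (0 < m)%N -> (forall i, 0 < a i) -> 0 <= h ->
  (forall j, size [seq i <- enum 'I_n | f i == j] = 3%N) ->
  (forall j, \sum_(i <- enum 'I_n | f i == j) a i + h = H) ->
  exists T, addition_tree (map a (enum 'I_n) ++ nseq m (- H) ++ nseq m h) T /\
            tcost T = m%:Z * (H + h).
Proof.
move=> m_gt0 a_gt0 h_ge0 fib_size fib_sum.
pose fib j := [seq i <- enum 'I_n | f i == j].
pose ts := [seq block_tree h H (map a (fib j)) | j <- enum 'I_m].
have blockP j : [/\ tvalue (block_tree h H (map a (fib j))) = 0,
    tcost (block_tree h H (map a (fib j))) = H + h &
    leaves (block_tree h H (map a (fib j))) = [:: h, - H & map a (fib j)]].
  move: (fib_size j) (fib_sum j); rewrite -big_filter -/(fib j).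
  case: (fib j) => [|i1 [|i2 [|i3 [|]]]] // _; rewrite !big_cons big_nil => sum_j.
  by apply: block_tree_spec; rewrite ?a_gt0 //; lia.
have ts_size : (0 < size ts)%N by rewrite size_map size_enum_ord.
have ts0 : all (fun t => tvalue t == 0) ts.
  by rewrite all_map; apply/allP => j _ /=; have [-> _ _] := blockP j.
have [_ chain_cost chain_leaves] := chain_spec ts_size ts0.
exists (chain ts); split.
  rewrite /addition_tree chain_leaves -map_comp.
  rewrite (@eq_map _ _ _ (fun j => [:: h, - H & map a (fib j)])); last first.
    by move=> j /=; have [_ _ ->] := blockP j.
  rewrite (permPl (perm_flatten_cons2 _ _ _ _ _ _)) size_enum_ord.
  have -> : flatten [seq map a (fib j) | j <- enum 'I_m]
            = map a (flatten (map fib (enum 'I_m))) by rewrite map_flatten -map_comp.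
  apply/permP => P; rewrite !count_cat (permP (perm_map a (perm_fibers _ _ f _))).
  by rewrite [LHS]addnC -addnA [RHS]addnCA.
rewrite chain_cost big_map (eq_bigr (fun=> H + h)) => [|j _].
  by rewrite big_enum sumr_const card_ord -mulr_natl natz.
by have [_ -> _] := blockP j.
Qed.

(** * The potential of a multiset of leaves *)

Section LeafMultisets.

Variables (W K h : int) (m : nat).
Let L := 3 * W + K.
Let H := L + h.
(* Y exceeds |offset s| and hpart s for every sub-multiset s of the instance. *)
Let Y := m%:Z * (K + h) + 1.
Hypotheses (K_ge1 : 1 <= K) (h_ge : 3 * K <= h) (W_large : 100 * Y <= W).

Let K_gt0 : 0 < K. Proof. lia. Qed.
Let Y_ge1 : 1 <= Y. Proof. rewrite /Y; nia. Qed.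

Definition is_item (x : int) : bool := (x != - H) && (x != h).
Definition items (s : seq int) : seq int := filter is_item s.
Definition nneg (s : seq int) : nat := count_mem (- H) s.
Definition nsmall (s : seq int) : nat := count_mem h s.
Definition counts (s : seq int) : nat * nat * nat := (size (items s), nneg s, nsmall s).

Definition excess (s : seq int) : int :=
  \sum_(x <- items s) x - (size (items s))%:Z * W.
Definition weight (s : seq int) : int := (size (items s))%:Z - 3 * (nneg s)%:Z.
Definition offset (s : seq int) : int := excess s - (nneg s)%:Z * (K + h).
Definition hpart (s : seq int) : int := (nsmall s)%:Z * h.

Definition pot (s : seq int) : int :=
  5 * W * ((size (items s))%:Z - 1) + 5 * excess s
  + state_pot W Y (weight s) (offset s) (hpart s).

Lemma neg_neq_small : (- H == h) = false.
Proof. by apply/eqP; lia. Qed.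

Lemma sum_split (s : seq int) : \sum_(x <- s) x =
  \sum_(x <- items s) x - (nneg s)%:Z * (H) + (nsmall s)%:Z * h.
Proof.
rewrite /items /nneg /nsmall; elim: s => [|x s IH]; first by rewrite /= !big_nil; lia.
rewrite /= big_cons IH /is_item.
have [-> | xNneg] /= := eqVneq x (- H).
  by rewrite neg_neq_small /=; lia.
by have [-> | xNsmall] /= := eqVneq x h; rewrite ?big_cons /= ?xNneg ?xNsmall; lia.
Qed.

Lemma sum_decomp (s : seq int) :
  \sum_(x <- s) x = W * weight s + offset s + hpart s.
Proof. by rewrite sum_split /weight /offset /hpart /excess; lia. Qed.

Lemma items_cat (s1 s2 : seq int) : items (s1 ++ s2) = items s1 ++ items s2.
Proof. exact: filter_cat. Qed.

Lemma nneg_cat (s1 s2 : seq int) : nneg (s1 ++ s2) = (nneg s1 + nneg s2)%N.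
Proof. exact: count_cat. Qed.

Lemma nsmall_cat (s1 s2 : seq int) : nsmall (s1 ++ s2) = (nsmall s1 + nsmall s2)%N.
Proof. exact: count_cat. Qed.

Lemma counts_cat {s1 s2 : seq int} {p1 n1 q1 p2 n2 q2 : nat} :
  counts s1 = (p1, n1, q1) -> counts s2 = (p2, n2, q2) ->
  counts (s1 ++ s2) = (p1 + p2, n1 + n2, q1 + q2)%N.
Proof.
by rewrite /counts items_cat size_cat nneg_cat nsmall_cat => -[-> -> ->] [-> -> ->].
Qed.

Lemma excess_cat (s1 s2 : seq int) : excess (s1 ++ s2) = excess s1 + excess s2.
Proof. by rewrite /excess items_cat big_cat size_cat PoszD /=; ring. Qed.

Lemma weight_cat (s1 s2 : seq int) : weight (s1 ++ s2) = weight s1 + weight s2.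
Proof. by rewrite /weight items_cat size_cat nneg_cat; lia. Qed.

Lemma offset_cat (s1 s2 : seq int) : offset (s1 ++ s2) = offset s1 + offset s2.
Proof. by rewrite /offset excess_cat nneg_cat PoszD; ring. Qed.

Lemma hpart_cat (s1 s2 : seq int) : hpart (s1 ++ s2) = hpart s1 + hpart s2.
Proof. by rewrite /hpart nsmall_cat PoszD; ring. Qed.

Lemma weight_counts {s : seq int} {p n q : nat} :
  counts s = (p, n, q) -> weight s = p%:Z - 3 * n%:Z.
Proof. by rewrite /weight /counts => -[-> -> _]. Qed.

Lemma counts_all_items {s : seq int} : all is_item s -> counts s = (size s, 0, 0)%N.
Proof.
move=> /all_filterP items_s; rewrite /counts /items items_s /nneg /nsmall.
move: items_s => /all_filterP /allP items_s.
by rewrite !(eq_in_count (a2 := pred0)) ?count_pred0 // => x /items_s /andP[? ?]; apply/negbTE.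
Qed.

Lemma counts_nseq_neg (n : nat) : counts (nseq n (- H)) = (0, n, 0)%N.
Proof.
rewrite /counts /items /nneg /nsmall filter_nseq !count_nseq /is_item eqxx /=.
by rewrite eqxx neg_neq_small mul1n mul0n.
Qed.

Lemma counts_nseq_small (n : nat) : counts (nseq n h) = (0, 0, n)%N.
Proof.
rewrite /counts /items /nneg /nsmall filter_nseq !count_nseq /is_item eqxx andbF /=.
by rewrite eqxx eq_sym neg_neq_small mul1n mul0n.
Qed.

Lemma counts_perm {s1 s2 : seq int} : perm_eq s1 s2 -> counts s1 = counts s2.
Proof.
by move=> perm12; rewrite /counts /items !size_filter /nneg /nsmall !(permP perm12).
Qed.

Lemma pot_perm {s1 s2 : seq int} : perm_eq s1 s2 -> pot s1 = pot s2.
Proof.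
move=> perm12; have := counts_perm perm12; rewrite /pot /weight /offset /hpart /excess /counts.
by move=> [-> -> ->]; rewrite (perm_big _ (perm_filter _ perm12)).
Qed.

Lemma pot_leaf (z : int) : pot [:: z] = 0.
Proof.
rewrite /pot /weight /offset /hpart /excess /items /nneg /nsmall /is_item /=.
have [-> | zNneg] := eqVneq z (- H); last have [-> | zNsmall] := eqVneq z h;
  rewrite ?neg_neq_small /= ?big_nil ?big_seq1 /state_pot /fine_pot /wpot /hflag
    /ecoef /tcoef /=; case: ifP => /andP; lia.
Qed.

Lemma counts_leaf (z : int) :
  [\/ counts [:: z] = (1, 0, 0)%N, counts [:: z] = (0, 1, 0)%N | counts [:: z] = (0, 0, 1)%N].
Proof.
rewrite /counts /items /nneg /nsmall /is_item /=.
have [-> | zNneg] := eqVneq z (- H); last have [-> | zNsmall] := eqVneq z h.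
- by rewrite neg_neq_small; constructor 2.
- by constructor 3.
by constructor 1.
Qed.

Definition block_ok (B : seq int) : bool :=
  (\sum_(x <- B) x == L) || (\sum_(x <- B) x == H).

(* Each block, together with one copy of -H and, when its sum is L, one copy
   of h, sums to zero. *)
Definition blocked (s : seq int) : Prop :=
  exists2 bl : seq (seq int), perm_eq (flatten bl) (items s) &
    [/\ size (items s) = (3 * size bl)%N, nneg s = size bl,
        nsmall s = count (fun B => \sum_(x <- B) x == L) bl & all block_ok bl].

Definition null_tight (s : seq int) : Prop :=
  [\/ counts s = (0, 0, 1)%N, counts s = (3, 1, 0)%N /\ \sum_(x <- s) x < 0 | blocked s].

(* The leaf multiset of every subtree of a tree T with 5 C(T) = pot (leaves T)
   is tight. *)
Definition tight (s : seq int) : Prop :=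
  [\/ counts s = (1, 0, 0)%N, counts s = (2, 0, 0)%N, counts s = (2, 1, 0)%N
    | counts s = (0, 1, 0)%N] \/ null_tight s.

Lemma H_neq_L : (H == L) = false.
Proof. by apply/eqP; lia. Qed.

Lemma sum_blocks (bl : seq (seq int)) : all block_ok bl ->
  \sum_(B <- bl) \sum_(x <- B) x = (size bl)%:Z * (H)
    - (count (fun B => \sum_(x <- B) x == L) bl)%:Z * h.
Proof.
elim: bl => [|B bl IH]; first by rewrite big_nil /=; lia.
by rewrite big_cons /= => /andP[/orP[] /eqP-> /IH->]; rewrite ?eqxx ?H_neq_L /=; lia.
Qed.

Lemma blocked_sum (s : seq int) : blocked s -> \sum_(x <- s) x = 0.
Proof.
move=> [bl perm_bl [_ nneg_bl nsmall_bl ok_bl]].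
rewrite sum_split -(perm_big _ perm_bl) big_flatten /= sum_blocks //.
by rewrite nneg_bl nsmall_bl; lia.
Qed.

Lemma blocked_cat (s1 s2 : seq int) : blocked s1 -> blocked s2 -> blocked (s1 ++ s2).
Proof.
move=> [bl1 perm1 [size1 nneg1 nsmall1 ok1]] [bl2 perm2 [size2 nneg2 nsmall2 ok2]].
exists (bl1 ++ bl2); first by rewrite flatten_cat items_cat perm_cat.
rewrite items_cat nneg_cat nsmall_cat !size_cat count_cat all_cat ok1 ok2.
by rewrite size1 size2 nneg1 nneg2 nsmall1 nsmall2 mulnDr.
Qed.

Lemma blocked_single {s : seq int} {q : nat} :
  counts s = (3, 1, q)%N -> (q <= 1)%N -> \sum_(x <- s) x = 0 -> blocked s.
Proof.
move=> [size_s nneg_s nsmall_s] q_le1; rewrite sum_split nneg_s nsmall_s => sum0.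
exists [:: items s]; first by rewrite /= cats0.
rewrite /= /block_ok size_s nneg_s nsmall_s andbT addn0.
have [q0 | q1] : q = 0%N \/ q = 1%N by lia.
  have -> : \sum_(x <- items s) x = H by move: sum0; rewrite q0; lia.
  by rewrite q0 eqxx H_neq_L orbT.
have -> : \sum_(x <- items s) x = L by move: sum0; rewrite q1; lia.
by rewrite q1 eqxx.
Qed.

Lemma sum_counts_small (s : seq int) : counts s = (0, 0, 1)%N -> \sum_(x <- s) x = h.
Proof.
move=> [/size0nil items0 nneg0 nsmall1].
by rewrite sum_split items0 nneg0 nsmall1 big_nil; lia.
Qed.

Lemma null_tight_sum (s : seq int) : null_tight s ->
  [\/ counts s = (0, 0, 1)%N /\ \sum_(x <- s) x = h,
      counts s = (3, 1, 0)%N /\ \sum_(x <- s) x < 0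
    | blocked s /\ \sum_(x <- s) x = 0].
Proof.
case=> [c | neg | b]; [constructor 1 | constructor 2 | constructor 3] => //.
  by split => //; apply: sum_counts_small.
by split => //; apply: blocked_sum.
Qed.

Lemma null_tight_cat (s1 s2 : seq int) : null_tight s1 -> null_tight s2 ->
  \sum_(x <- s1 ++ s2) x = 0 -> blocked (s1 ++ s2).
Proof.
move=> /null_tight_sum T1 /null_tight_sum T2 sum0.
have sum_cat : \sum_(x <- s1 ++ s2) x = \sum_(x <- s1) x + \sum_(x <- s2) x.
  by rewrite big_cat.
case: T1 T2 => [[c1 e1] | [c1 e1] | [b1 e1]] [[c2 e2] | [c2 e2] | [b2 e2]]; try lia.
- by apply: (blocked_single (counts_cat c1 c2)); lia.
- by apply: (blocked_single (counts_cat c1 c2)); lia.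
exact: blocked_cat.
Qed.

Lemma null_tight_weight {s : seq int} : null_tight s -> weight s = 0.
Proof.
case=> [c | [c _] | [bl _ [size_s nneg_s _ _]]].
- by rewrite (weight_counts c).
- by rewrite (weight_counts c).
by rewrite /weight size_s nneg_s; lia.
Qed.

Lemma tight_weight (s : seq int) : tight s ->
  [/\ weight s = 1 -> counts s = (1, 0, 0)%N, weight s = 2 -> counts s = (2, 0, 0)%N,
      weight s = -1 -> counts s = (2, 1, 0)%N, weight s = -3 -> counts s = (0, 1, 0)%N
    & weight s = 0 -> null_tight s].
Proof.
case=> [[] c | T]; last by rewrite (null_tight_weight T).
all: by rewrite (weight_counts c) c; split.
Qed.

Lemma tight_triple {s : seq int} :
  counts s = (3, 1, 0)%N -> \sum_(x <- s) x <= 0 -> tight s.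
Proof.
move=> c; rewrite le_eqVlt => /orP[/eqP sum0 | neg]; right.
  by constructor 3; apply: blocked_single c _ sum0.
by constructor 2.
Qed.

Lemma tight_cat (s1 s2 : seq int) : tight s1 -> tight s2 ->
  tight_merge (weight s1) (weight s2) (offset (s1 ++ s2)) (hpart (s1 ++ s2)) ->
  tight (s1 ++ s2).
Proof.
move=> /tight_weight[A1 B1 C1 D1 N1] /tight_weight[A2 B2 C2 D2 N2].
have sum12 := sum_decomp (s1 ++ s2); rewrite weight_cat in sum12.
case=> [] [[w1 [w2 _]] | [[w1 [w2 _]] | [[w1 [w2 e0]] | [w1 [w2 [t0 e0]]]]]].
- by left; constructor 2; apply: (counts_cat (A1 w1) (A2 w2)).
- by left; constructor 3; apply: (counts_cat (B1 w1) (D2 w2)).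
- by right; constructor 3; apply: null_tight_cat (N1 w1) (N2 w2) _; lia.
- by apply: tight_triple (counts_cat (A1 w1) (C2 w2)) _; lia.
- by left; constructor 2; apply: (counts_cat (A1 w2) (A2 w1)).
- by left; constructor 3; apply: (counts_cat (D1 w2) (B2 w1)).
- by right; constructor 3; apply: null_tight_cat (N1 w2) (N2 w1) _; lia.
by apply: tight_triple (counts_cat (C1 w2) (A2 w1)) _; lia.
Qed.

Lemma tight_leaf (z : int) : tight [:: z].
Proof.
by case: (counts_leaf z) => c;
  [left; constructor 1 | left; constructor 4 | right; constructor 1].
Qed.

Definition bounded (s : seq int) : Prop :=
  [/\ {in items s, forall x, K < 4 * (x - W) /\ 2 * (x - W) < K},
      (size (items s) <= 3 * m)%N, (nneg s <= m)%N & (nsmall s <= m)%N].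

Lemma bounded_cat {s1 s2 : seq int} :
  bounded (s1 ++ s2) -> bounded s1 /\ bounded s2.
Proof.
rewrite /bounded items_cat size_cat nneg_cat nsmall_cat => -[item_bd ? ? ?].
by split; split; try lia; move=> x x_in; apply: item_bd; rewrite mem_cat x_in ?orbT.
Qed.

Lemma excess_bounds {s : seq int} :
  {in items s, forall x, K < 4 * (x - W) /\ 2 * (x - W) < K} ->
  (size (items s))%:Z * (K + 1) <= 4 * excess s /\
  2 * excess s <= (size (items s))%:Z * (K - 1).
Proof.
rewrite /excess; elim: (items s) => [|x r IH] item_bd /=; first by rewrite big_nil; lia.
have [x_lo x_hi] := item_bd x (mem_head x r).
have /IH [] : {in r, forall y, K < 4 * (y - W) /\ 2 * (y - W) < K}.
  by move=> y y_in; apply: item_bd; rewrite inE y_in orbT.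
by rewrite big_cons /=; nia.
Qed.

Lemma bounded_admissible {s : seq int} : bounded s ->
  admissible K Y (weight s) (offset s) (hpart s).
Proof.
move=> [item_bd size_le nneg_le nsmall_le].
have [lo hi] := excess_bounds item_bd.
by apply: admissible_counts => //; lia.
Qed.

Lemma merge_slack_pot (l r : seq int) :
  merge_slack W Y (weight l) (weight r) (offset l) (offset r)
    (hpart l) (hpart r)
  = 5 * `|\sum_(x <- l ++ r) x| + pot l + pot r - pot (l ++ r).
Proof.
rewrite sum_decomp /merge_slack /pot weight_cat offset_cat hpart_cat excess_cat.
by rewrite items_cat size_cat PoszD; ring.
Qed.

Lemma pot_tree {t : tree} : bounded (leaves t) ->
  pot (leaves t) <= 5 * tcost t /\
  (pot (leaves t) = 5 * tcost t -> tight (leaves t)).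
Proof.
elim: t => [z | l IHl r IHr] /=.
  by rewrite pot_leaf // => _; split=> // _; apply: tight_leaf.
move=> bd_lr; have [bd_l bd_r] := bounded_cat bd_lr.
have [pot_l tight_l] := IHl bd_l; have [pot_r tight_r] := IHr bd_r.
have adm_lr := bounded_admissible bd_lr.
rewrite weight_cat offset_cat hpart_cat in adm_lr.
have [slack_ge0 slack0] :=
  merge_slack_ge0 _ _ _ K_gt0 Y_ge1 W_large
    (bounded_admissible bd_l) (bounded_admissible bd_r) adm_lr.
rewrite merge_slack_pot in slack_ge0 slack0.
have -> : tvalue l + tvalue r = \sum_(x <- leaves l ++ leaves r) x.
  by rewrite big_cat /= !tvalue_leaves.
split=> [|tight_eq]; first by lia.
apply: tight_cat; [apply: tight_l | apply: tight_r | ]; try lia.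
by rewrite offset_cat hpart_cat; apply: slack0; lia.
Qed.

(** * The instance of the reduction *)

Section Instance.

Variable a : 'I_(3 * m) -> int.
Hypotheses (m_gt0 : (0 < m)%N)
  (a_bd : forall i, K < 4 * (a i - W) /\ 2 * (a i - W) < K)
  (a_sum : \sum_(i < 3 * m) (a i - W) = m%:Z * K).

Let X := map a (enum 'I_(3 * m)) ++ nseq m (- H) ++ nseq m h.

Let h_ltW : h < W. Proof. by move: W_large; rewrite /Y; nia. Qed.

Lemma a_gtW (i : 'I_(3 * m)) : W < a i.
Proof. by have := a_bd i; lia. Qed.

Lemma is_item_a (i : 'I_(3 * m)) : is_item (a i).
Proof. by have := a_gtW i; rewrite /is_item; case: eqP; case: eqP => //; lia. Qed.

Lemma counts_X : counts X = (3 * m, m, m)%N.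
Proof.
have items_a : all is_item (map a (enum 'I_(3 * m))).
  by rewrite all_map; apply/allP => i _; apply: is_item_a.
rewrite /X (counts_cat (counts_all_items items_a)
  (counts_cat (counts_nseq_neg m) (counts_nseq_small m))).
by rewrite size_map size_enum_ord !addn0 !add0n.
Qed.

Lemma items_X : items X = map a (enum 'I_(3 * m)).
Proof.
have [/size0nil items_neg _ _] := counts_nseq_neg m.
have [/size0nil items_small _ _] := counts_nseq_small m.
rewrite /X !items_cat items_neg items_small !cats0 /items; apply/all_filterP.
by rewrite all_map; apply/allP => i _; apply: is_item_a.
Qed.

Lemma excess_X : excess X = m%:Z * K.
Proof.
rewrite /excess items_X size_map size_enum_ord big_map big_enum /= -a_sum sumrB.
by rewrite sumr_const card_ord -mulr_natl natz.
Qed.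

Lemma pot_X : pot X = 5 * (m%:Z * (H + h)).
Proof.
rewrite /pot /weight /offset /hpart excess_X.
have [-> -> ->] : [/\ size (items X) = (3 * m)%N, nneg X = m & nsmall X = m].
  by have := counts_X; rewrite /counts => -[-> -> ->].
rewrite /state_pot /fine_pot /wpot /hflag /ecoef /tcoef.
have -> : (3 * m)%N%:Z - 3 * m%:Z = 0 by lia.
by rewrite eqxx andbF /H /=; nia.
Qed.

Lemma bounded_of_perm {s : seq int} : perm_eq s X -> bounded s.
Proof.
move=> perm_sX; have := counts_perm perm_sX; rewrite counts_X => -[size_s nneg_s nsmall_s].
split; rewrite ?size_s ?nneg_s ?nsmall_s // => x.
by rewrite (perm_mem (perm_filter _ perm_sX)) -/(items X) items_X => /mapP[i _ ->].
Qed.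

Lemma three_partition_of_tight {s : seq int} :
  perm_eq s X -> tight s -> three_partition m a L.
Proof.
move=> perm_sX; have counts_s := counts_perm perm_sX; rewrite counts_X in counts_s.
case=> [[] c | [c | [c _] | [bl perm_bl [_ nneg_bl nsmall_bl ok_bl]]]];
  try by move: counts_s; rewrite c => -[]; lia.
have [_ nneg_s nsmall_s] := counts_s; rewrite /counts in counts_s.
apply: (three_partition_of_blocks _ _ _ _ bl).
- by rewrite -nneg_bl; case: counts_s.
- by apply: perm_trans perm_bl _; rewrite -items_X; apply: perm_filter.
rewrite all_count -nsmall_bl -nneg_bl.
by case: counts_s => _ -> ->.
Qed.

Lemma fiber_size3 (r : seq 'I_(3 * m)) : \sum_(i <- r) a i = L -> size r = 3%N.
Proof.
have items_r : all is_item (map a r) by rewrite all_map; apply/allP => i _; apply: is_item_a.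
have [] := @excess_bounds (map a r).
  by move=> x; rewrite /items (all_filterP items_r) => /mapP[i _ ->].
rewrite /excess /items (all_filterP items_r) big_map size_map => lo hi sum_r.
have K_ltW : K < W by move: W_large; rewrite /Y; nia.
have [r_le2 | [r3 | r_ge4]] : (size r <= 2 \/ size r = 3 \/ 4 <= size r)%N by lia.
- by move: hi; rewrite sum_r; nia.
- by [].
by move: lo; rewrite sum_r; nia.
Qed.

Lemma tree_of_three_partition : three_partition m a L ->
  exists T, addition_tree X T /\ tcost T = m%:Z * (H + h).
Proof.
move=> [f f_sum].
have fib_sum j : \sum_(i <- enum 'I_(3 * m) | f i == j) a i = L.
  by rewrite big_enum_cond -(f_sum j); apply: eq_bigl.
apply: tree_of_fibers => //.
- by move=> i; have := a_gtW i; lia.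
- by lia.
- by move=> j; apply: fiber_size3; rewrite big_filter.
by move=> j; rewrite fib_sum /H.
Qed.

Lemma min_tree_cost (T : tree) : min_addition_tree X T ->
  m%:Z * (H + h) <= tcost T /\
  (tcost T = m%:Z * (H + h) <-> three_partition m a L).
Proof.
move=> [perm_TX T_min].
have [pot_le pot_eq] := pot_tree (bounded_of_perm perm_TX).
rewrite (pot_perm perm_TX) pot_X in pot_le pot_eq.
split=> [|]; first by lia.
split=> [cost_eq | /tree_of_three_partition [T' [perm_T'X cost_T']]].
  by apply: three_partition_of_tight perm_TX _; apply: pot_eq; lia.
by have := T_min T' perm_T'X; lia.
Qed.

End Instance.

End LeafMultisets.

Lemma padding_bounds {m K : nat} : (0 < m)%N -> (0 < K)%N ->
  let W := (100 * (5 * m) ^ 2 * K)%N in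
  let h := ((4 * (3 * W + K)) %/ (400 * (5 * m) ^ 2))%N in
  (3 * K <= h)%N /\ (100 * (m * (K + h) + 1) <= W)%N.
Proof.
move=> m_gt0 K_gt0 W h.
have m2E : ((5 * m) ^ 2 = 25 * (m * m))%N by rewrite expnMn; lia.
have d_gt0 : (0 < 400 * (5 * m) ^ 2)%N by rewrite m2E; nia.
have h_ge : (3 * K <= h)%N by rewrite /h leq_divRL // /W m2E; nia.
have h_le : (h <= 4 * K)%N by rewrite -ltnS /h ltn_divLR // /W m2E; nia.
by split=> //; rewrite /W m2E; nia.
Qed.

Theorem lemma2p10 (m K : nat) (b : 'I_(3 * m) -> nat) :
  (0 < m)%N -> (0 < K)%N ->
  (forall i, 0 < b i)%N ->
  (forall i, K < 4 * b i /\ 2 * b i < K)%N ->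
  (\sum_(i < 3 * m) b i = m * K)%N ->
  let W : nat := (100 * (5 * m) ^ 2 * K)%N in
  let a : 'I_(3 * m) -> int := fun i => ((b i + W)%N)%:Z in
  let L : nat := (3 * W + K)%N in
  let h : nat := ((4 * L) %/ (400 * (5 * m) ^ 2))%N in
  let H : nat := (L + h)%N in
  let X : seq int :=
    [seq a i | i <- enum 'I_(3 * m)] ++ nseq m (- H%:Z) ++ nseq m h%:Z in
  forall Tmin : tree, min_addition_tree X Tmin ->
    (m * (H + h))%N%:Z <= tcost Tmin /\
    (tcost Tmin = (m * (H + h))%N%:Z <-> three_partition m a L%:Z).
Proof.
move=> m_gt0 K_gt0 _ b_bd b_sum W a L h H X Tmin.
have [h_ge W_large] := padding_bounds m_gt0 K_gt0.
have a_bd i : K%:Z < 4 * (a i - W%:Z) /\ 2 * (a i - W%:Z) < K%:Z.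
  by have := b_bd i; rewrite /a; lia.
have a_sum : \sum_(i < 3 * m) (a i - W%:Z) = m%:Z * K%:Z.
  rewrite (eq_bigr (fun i => (b i)%:Z)) => [|i _]; last by rewrite /a; lia.
  by rewrite -PoszM -b_sum (big_morph Posz PoszD (erefl 0%:Z)).
have HE : H%:Z = 3 * W%:Z + K%:Z + h%:Z by rewrite /H /L; lia.
have LE : L%:Z = 3 * W%:Z + K%:Z by rewrite /L; lia.
have costE : (m * (H + h))%N%:Z = m%:Z * (3 * W%:Z + K%:Z + h%:Z + h%:Z).
  by rewrite PoszM PoszD HE.
rewrite /X HE LE costE; apply: min_tree_cost => //; lia.
Qed.
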